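(* Fix an agent index $i$. For every $w\in\mathcal{R}_\infty^i$: (i) $Sw\in\mathcal{R}_\infty^i$; (ii) $S^{-1}w\in\mathcal{R}_\infty^i$; (iii) $S\mathcal{R}_\infty^i = \mathcal{R}_\infty^i$; (iv) $[(\Pi_i w)^\top\ w^\top]^\top\in\mathcal{O}_\infty^i$.
   Context: Agent $i$ has matrices $A_i\in\mathbb{R}^{n_i\times n_i}$, $B_i\in\mathbb{R}^{n_i\times m_i}$, $C_i\in\mathbb{R}^{q\times n_i}$ with $(A_i,B_i)$ controllable, and a constraint set $\mathbb{Z}_i\subset\mathbb{R}^{n_i+m_i}$ which is a polytope containing the origin in its interior. $K_i$ is fixed with $A_i^c := A_i + B_iK_i$ Schur. $S\in\mathbb{R}^{p\times p}$, $Q_e\in\mathbb{R}^{q\times p}$ with $S^\rho = I$ for some positive integer $\rho$, and for each eigenvalue $\lambda$ of $S$ the matrix $\begin{bmatrix} A_i-\lambda I & B_i\\ C_i & \mathbf{0}\end{bmatrix}$ has full row rank. $\Pi_i,\Gamma_i$ satisfy $A_i\Pi_i + B_i\Gamma_i = \Pi_iS$, $C_i\Pi_i = Q_e$, and $L_i := \Gamma_i - K_i\Pi_i$. Fix $\epsilon_i\in(0,1)$. $\mathcal{O}_\infty^i$ is the set of $(x,w)\in\mathbb{R}^{n_i}\times\mathbb{R}^p$ such that the sequence $x(0)=x$, $w(0)=w$, $x(k+1) = A_i^cx(k) + B_iL_iw(k)$, $w(k+1) = Sw(k)$ satisfies $[x(k)^\top\ (K_ix(k) + L_iw(k))^\top]^\top\in(1-\epsilon_i)\mathbb{Z}_i$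 for all $k\ge0$. $\mathcal{R}_\infty^i = \{w\in\mathbb{R}^p : \exists x \text{ with } [x^\top\ w^\top]^\top\in\mathcal{O}_\infty^i\}$. *)

From HB Require Import structures.
From mathcomp Require Import all_boot all_order all_algebra.
From mathcomp Require Import reals complex.
Set Implicit Arguments. Unset Strict Implicit. Unset Printing Implicit Defensive.
Import Order.TTheory GRing.Theory Num.Theory.
Local Open Scope ring_scope.

Section Defs.
Variable R : realType.

Definition cmx (m n : nat) (A : 'M[R]_(m, n)) : 'M[R[i]]_(m, n) :=
  map_mx (fun r : R => (r%:C)%C) A.

Definition schur (n : nat) (A : 'M[R]_n) : Prop :=
  forall l : R[i], eigenvalue (cmx A) l -> `|l| < 1.

Definition controllable (n m : nat) (A : 'M[R]_n) (B : 'M[R]_(n, m)) : Prop :=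
  row_full (\mxrow_(k < n) (A ^+ k *m B) : 'M[R]_(n, \sum_(k < n) m)).

Definition nonresonance (n m q p : nat) (A : 'M[R]_n) (B : 'M[R]_(n, m))
  (C : 'M[R]_(q, n)) (S : 'M[R]_p) : Prop :=
  forall l : R[i], eigenvalue (cmx S) l ->
    row_free (block_mx (cmx A - l%:M) (cmx B) (cmx C) (0 : 'M[R[i]]_(q, m))).

Definition polytope (d : nat) (Z : 'cV[R]_d -> Prop) : Prop :=
  (exists (r : nat) (H : 'M[R]_(r, d)) (h : 'cV[R]_r),
      forall z, Z z <-> forall j, (H *m z) j 0 <= h j 0) /\
  (exists M : R, forall z, Z z -> forall j, `|z j 0| <= M).

Definition origin_interior (d : nat) (Z : 'cV[R]_d -> Prop) : Prop :=
  exists e : R, 0 < e /\ forall z : 'cV[R]_d, (forall j, `|z j 0| < e) -> Z z.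

Definition scale_set (d : nat) (c : R) (Z : 'cV[R]_d -> Prop) : 'cV[R]_d -> Prop :=
  fun z => exists z', Z z' /\ z = c *: z'.

Definition traj (n m p : nat) (Ac : 'M[R]_n) (B : 'M[R]_(n, m))
  (L : 'M[R]_(m, p)) (S : 'M[R]_p) (x : 'cV[R]_n) (w : 'cV[R]_p) (k : nat)
  : 'cV[R]_n * 'cV[R]_p :=
  iter k (fun xw => (Ac *m xw.1 + B *m (L *m xw.2), S *m xw.2)) (x, w).

Definition Oinf (n m p : nat) (A : 'M[R]_n) (B : 'M[R]_(n, m))
  (K : 'M[R]_(m, n)) (L : 'M[R]_(m, p)) (S : 'M[R]_p) (eps : R)
  (Z : 'cV[R]_(n + m) -> Prop) (x : 'cV[R]_n) (w : 'cV[R]_p) : Prop :=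
  forall k : nat,
    let xw := traj (A + B *m K) B L S x w k in
    scale_set (1 - eps) Z (col_mx xw.1 (K *m xw.1 + L *m xw.2)).

Definition Rinf (n m p : nat) (A : 'M[R]_n) (B : 'M[R]_(n, m))
  (K : 'M[R]_(m, n)) (L : 'M[R]_(m, p)) (S : 'M[R]_p) (eps : R)
  (Z : 'cV[R]_(n + m) -> Prop) (w : 'cV[R]_p) : Prop :=
  exists x : 'cV[R]_n, Oinf A B K L S eps Z x w.

End Defs.

From HB Require Import structures.
From mathcomp Require Import all_boot all_order all_algebra.
From mathcomp Require Import reals complex.
From mathcomp Require Import boolp topology normedtype sequences.
From mathcomp Require Import lra.
Set Implicit Arguments. Unset Strict Implicit. Unset Printing Implicit Defensive.
Import Order.TTheory GRing.Theory Num.Theory.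
Import numFieldNormedType.Exports.
Local Open Scope ring_scope.
Local Open Scope classical_set_scope.
Import Normc.

(* With the regulator equation, the trajectory from (x, w) is the one from
   (Pi w, w) plus the deviation (A + B K)^k (x - Pi w), which tends to 0 since
   A + B K is Schur.  As S^rho = 1, the exosystem is back at S^k w at every
   time k + N rho, so each half-space constraint met along the trajectory from
   (x, w) holds up to an arbitrarily small error, hence exactly, at time k of
   the trajectory from (Pi w, w).  The decay of the powers of a Schur matrix
   comes from Cayley-Hamilton: peeling off one complex factor A - l of the
   characteristic polynomial at a time reduces it to a first-order recursion
   with |l| < 1.  Everything else follows from S^-1 = S^(rho - 1). *)

Section SchurDecay.
Variable R : realType.

Lemma cvg0_contraction (r : R) (a b : R^nat) : 0 <= r < 1 ->
  (forall k, 0 <= a k) -> (forall k, a k.+1 <= r * a k + b k) ->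
  b @ \oo --> 0 -> a @ \oo --> 0.
Proof.
move=> /andP[r_ge0 r_lt1] a_ge0 a_rec /cvgr0_norm_lt b_cvg0.
apply/cvgr0Pnorm_lt => e e_gt0.
have [N _ b_small] := b_cvg0 ((1 - r) * e / 2) ltac:(apply: divr_gt0 => //; nra).
have a_bound j : a (j + N)%N <= r ^+ j * a N + e / 2.
  elim: j => [|j IH]; first by rewrite expr0 mul1r; lra.
  have := b_small (j + N)%N (leq_addl _ _); rewrite /= ltr_norml => /andP[_ bj].
  have := a_rec (j + N)%N; have := ler_wpM2l r_ge0 IH; rewrite addSn exprS; nra.
have r_norm_lt1 : `|r| < 1 by rewrite ger0_norm.
have [J _ geo_small] := cvgr0_norm_lt _ (cvg_geometric (a N) r_norm_lt1) (e / 2)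
  ltac:(lra).
exists (J + N)%N => // k /= Jk.
have Nk : (N <= k)%N by rewrite (leq_trans (leq_addl _ _) Jk).
rewrite ger0_norm // -(subnK Nk); apply: le_lt_trans (a_bound _) _.
have := geo_small (k - N)%N; rewrite /= leq_subRL // addnC => /(_ Jk).
rewrite ger0_norm ?mulr_ge0 ?exprn_ge0 // mulrC; lra.
Qed.

Lemma normc_ge0 (x : R[i]) : 0 <= normc x.
Proof. by case: x => a b; exact: sqrtr_ge0. Qed.

Lemma normc_real (x : R) : normc (x%:C)%C = `|x|.
Proof. by rewrite /normc /= expr0n addr0 sqrtr_sqr. Qed.

Lemma cvg0_first_order (l : R[i]) (u v : nat -> R[i]) : normc l < 1 ->
  (forall k, u k = v k.+1 - l * v k) ->
  (fun k => normc (u k)) @ \oo --> 0 -> (fun k => normc (v k)) @ \oo --> 0.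
Proof.
move=> l_lt1 uv; apply: (@cvg0_contraction (normc l)) => [|k|k].
- by rewrite normc_ge0 l_lt1.
- exact: normc_ge0.
- by rewrite -normcM -[v k.+1](addrNK (l * v k)) -uv addrC le_normcD.
Qed.

Section StablePowers.
Variables (n : nat) (A : 'M[R[i]]_n.+1).

Lemma cvg0_stable_factors (s : seq R[i]) : {in s, forall z, normc z < 1} ->
  forall (a : 'rV_n.+1) (b : 'cV_n.+1),
  (fun k => normc ((a *m horner_mx A (\prod_(z <- s) ('X - z%:P)) *m A ^+ k *m b) 0 0))
    @ \oo --> 0 ->
  (fun k => normc ((a *m A ^+ k *m b) 0 0)) @ \oo --> 0.
Proof.
elim: s => [|z s IH] s_stable a b.
  by rewrite big_nil rmorph1 mulmx1.
rewrite big_cons rmorphM rmorphB /= horner_mx_X horner_mx_C -mulmxE mulmxA => cvg_s.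
have := IH (fun y sy => s_stable y (mem_behead (s := z :: s) sy)) _ b cvg_s.
apply: (@cvg0_first_order z (fun k => (a *m (A - z%:M) *m A ^+ k *m b) 0 0)
  (fun k => (a *m A ^+ k *m b) 0 0) (s_stable z (mem_head _ _))) => k.
rewrite mulmxBr mul_mx_scalar exprS -mulmxE !mulmxBl.
by rewrite -!scalemxAl !mxE !mulmxA.
Qed.

Lemma cvg0_stable_powers : (forall l, eigenvalue A l -> normc l < 1) ->
  forall (a : 'rV_n.+1) (b : 'cV_n.+1),
  (fun k => normc ((a *m A ^+ k *m b) 0 0)) @ \oo --> 0.
Proof.
move=> A_stable a b.
have [s char_s] := closed_field_poly_normal (char_poly A).
rewrite (monicP (char_poly_monic A)) scale1r in char_s.
apply: (@cvg0_stable_factors s).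
  by move=> z sz; apply: A_stable; rewrite eigenvalue_root_char char_s root_prod_XsubC.
rewrite -char_s Cayley_Hamilton mulmx0.
under eq_fun do rewrite !mul0mx mxE normc0.
exact: cvg_cst.
Qed.

End StablePowers.

Lemma schur_cvg0 n (Ac : 'M[R]_n) : schur Ac ->
  forall (f : 'rV_n) (e : 'cV_n), (fun k => (f *m Ac ^+ k *m e) 0 0) @ \oo --> 0.
Proof.
case: n Ac => [|n] Ac Ac_schur f e.
  rewrite [f]thinmx0; under eq_fun do rewrite !mul0mx mxE.
  exact: cvg_cst.
have Ac_stable l : eigenvalue (cmx Ac) l -> normc l < 1.
  by case: l => x y /Ac_schur; rewrite normc_def -[1]/((1 : R)%:C)%C ltcR.
apply/(@norm_cvg0P _ R^o); have := cvg0_stable_powers Ac_stable (cmx f) (cmx e).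
by under eq_fun do rewrite /cmx -rmorphXn -!map_mxM mxE normc_real.
Qed.

End SchurDecay.

Lemma scale_set_halfspaces (R : realType) d r (Z : 'cV[R]_d -> Prop)
    (H : 'M[R]_(r, d)) (h : 'cV[R]_r) (c : R) :
  (forall z, Z z <-> forall j, (H *m z) j 0 <= h j 0) -> 0 < c ->
  forall z, scale_set c Z z <-> forall j, (H *m z) j 0 <= c * h j 0.
Proof.
move=> Z_halfspaces c_gt0 z; split.
  case=> z' [/Z_halfspaces Zz' ->] j.
  by rewrite -scalemxAr mxE ler_wpM2l // ltW.
move=> Hz; exists (c^-1 *: z); split; last by rewrite scalerA mulfV ?gt_eqF ?scale1r.
by apply/Z_halfspaces => j; rewrite -scalemxAr mxE mulrC ler_pdivrMr // mulrC.
Qed.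

Lemma closed_loop_regulator (R : pzRingType) n m p (A : 'M[R]_n) (B : 'M[R]_(n, m))
    (K : 'M[R]_(m, n)) (S : 'M[R]_p) (Pi : 'M[R]_(n, p)) (Gam : 'M[R]_(m, p)) :
  A *m Pi + B *m Gam = Pi *m S ->
  (A + B *m K) *m Pi + B *m (Gam - K *m Pi) = Pi *m S.
Proof. by move=> <-; rewrite mulmxDl mulmxBr mulmxA addrAC -addrA subrK. Qed.

Lemma invmx_periodic (R : comUnitRingType) p (S : 'M[R]_p) rho :
  (0 < rho)%N -> S ^+ rho = 1%:M -> invmx S = S ^+ rho.-1.
Proof.
move=> rho_gt0 S_rho.
have S_Spred : S *m S ^+ rho.-1 = 1%:M by rewrite mulmxE -exprS prednK.
have [S_unit _] := mulmx1_unit S_Spred.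
by rewrite -[RHS]mul1mx -(mulVmx S_unit) -mulmxA S_Spred mulmx1.
Qed.

Section ClosedLoop.
Variable R : realType.
Variables (n m p : nat) (A : 'M[R]_n) (B : 'M[R]_(n, m)) (K : 'M[R]_(m, n))
  (L : 'M[R]_(m, p)) (S : 'M[R]_p) (eps : R) (Z : 'cV[R]_(n + m) -> Prop).

Local Notation Ac := (A + B *m K).
Local Notation Oinf := (Oinf A B K L S eps Z).
Local Notation Rinf := (Rinf A B K L S eps Z).

Lemma Oinf_step x w : Oinf x w -> Oinf (Ac *m x + B *m (L *m w)) (S *m w).
Proof. by move=> x_safe k; have := x_safe k.+1; rewrite /traj iterSr. Qed.

Lemma Rinf_mulmx w : Rinf w -> Rinf (S *m w).
Proof. by case=> x x_safe; exists (Ac *m x + B *m (L *m w)); exact: Oinf_step. Qed.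

Lemma Rinf_mulmxX j w : Rinf w -> Rinf (S ^+ j *m w).
Proof.
move=> w_R; elim: j => [|j IH]; first by rewrite expr0 mul1mx.
by rewrite exprS -mulmxE -mulmxA; exact: Rinf_mulmx.
Qed.

Definition state_input x w k : 'cV[R]_(n + m) :=
  let xw := traj Ac B L S x w k in col_mx xw.1 (K *m xw.1 + L *m xw.2).

Lemma traj_snd x w k : (traj Ac B L S x w k).2 = S ^+ k *m w.
Proof.
elim: k => [|k IH]; first by rewrite expr0 mul1mx.
by rewrite /traj iterS -/(traj _ _ _ _ _ _ k) /= IH exprS mulmxA mulmxE.
Qed.

Variable Pi : 'M[R]_(n, p).
Hypothesis Pi_reg : Ac *m Pi + B *m L = Pi *m S.

Lemma traj_fst x w k :
  (traj Ac B L S x w k).1 = Pi *m (S ^+ k *m w) + Ac ^+ k *m (x - Pi *m w).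
Proof.
elim: k => [|k IH]; first by rewrite /= !expr0 !mul1mx addrC subrK.
rewrite /traj iterS -/(traj _ _ _ _ _ _ k) /= IH traj_snd.
rewrite mulmxDr addrAC !mulmxA -!mulmxDl Pi_reg.
by rewrite !exprS -!mulmxE !mulmxA.
Qed.

Lemma state_input_deviation x w k :
  state_input x w k =
  state_input (Pi *m w) w k + col_mx 1%:M K *m (Ac ^+ k *m (x - Pi *m w)).
Proof.
rewrite /state_input /= !traj_fst !traj_snd subrr mulmx0 addr0.
by rewrite mul_col_mx mul1mx add_col_mx mulmxDr addrAC.
Qed.

Lemma state_input_periodic rho w k j : S ^+ rho = 1%:M ->
  state_input (Pi *m w) w (k + j * rho) = state_input (Pi *m w) w k.
Proof.
move=> S_rho; rewrite /state_input /= !traj_fst !traj_snd.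
by rewrite subrr !mulmx0 !addr0 exprD mulnC exprM S_rho expr1n mulr1.
Qed.

Lemma Oinf_Pi rho x w r (H : 'M[R]_(r, n + m)) (h : 'cV[R]_r) :
  (forall z, Z z <-> forall j, (H *m z) j 0 <= h j 0) ->
  schur Ac -> (0 < rho)%N -> S ^+ rho = 1%:M -> eps < 1 ->
  Oinf x w -> Oinf (Pi *m w) w.
Proof.
move=> Z_halfspaces Ac_schur rho_gt0 S_rho eps_lt1 x_safe k.
have c_gt0 : 0 < 1 - eps by rewrite subr_gt0.
have scaledZ := scale_set_halfspaces Z_halfspaces c_gt0.
apply/(scaledZ (state_input (Pi *m w) w k)) => j; apply/ler_addgt0Pr => d d_gt0.
pose g := row j H *m col_mx 1%:M K.
have [N _ small] := cvgr0_norm_lt _ (schur_cvg0 Ac_schur g (x - Pi *m w)) d d_gt0.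
have le_N : (N <= k + N * rho)%N.
  by rewrite (leq_trans (leq_pmulr _ rho_gt0)) ?leq_addl.
have := (scaledZ (state_input x w (k + N * rho))).1 (x_safe _) j.
rewrite state_input_deviation state_input_periodic // mulmxDr mxE.
have -> : (H *m (col_mx 1%:M K *m (Ac ^+ (k + N * rho) *m (x - Pi *m w)))) j 0 =
    (g *m Ac ^+ (k + N * rho) *m (x - Pi *m w)) 0 0.
  by rewrite /g !mulmxA -!row_mul [RHS]mxE.
have := small _ le_N; rewrite /= ltr_norml; lra.
Qed.

End ClosedLoop.

Theorem lemma4 (R : realType) (n m q p rho : nat)
  (A : 'M[R]_n) (B : 'M[R]_(n, m)) (C : 'M[R]_(q, n))
  (Z : 'cV[R]_(n + m) -> Prop) (K : 'M[R]_(m, n))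
  (S : 'M[R]_p) (Qe : 'M[R]_(q, p))
  (Pi : 'M[R]_(n, p)) (Gam : 'M[R]_(m, p)) (eps : R) :
  controllable A B ->
  polytope Z -> origin_interior Z ->
  schur (A + B *m K) ->
  (0 < rho)%N -> S ^+ rho = 1%:M ->
  nonresonance A B C S ->
  A *m Pi + B *m Gam = Pi *m S -> C *m Pi = Qe ->
  0 < eps < 1 ->
  let L := Gam - K *m Pi in
  (forall w : 'cV[R]_p, Rinf A B K L S eps Z w ->
      Rinf A B K L S eps Z (S *m w) /\
      Rinf A B K L S eps Z (invmx S *m w) /\
      Oinf A B K L S eps Z (Pi *m w) w) /\
  (forall v : 'cV[R]_p,
      Rinf A B K L S eps Z v <-> exists w, Rinf A B K L S eps Z w /\ v = S *m w).
Proof.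
move=> _ [[r [H [h Z_halfspaces]]] _] _ Ac_schur rho_gt0 S_rho _ Pi_eq _.
move=> /andP[_ eps_lt1] L.
have Pi_reg := closed_loop_regulator K Pi_eq.
have S_inv := invmx_periodic rho_gt0 S_rho.
have Rinf_invmx w : Rinf A B K L S eps Z w -> Rinf A B K L S eps Z (invmx S *m w).
  by rewrite S_inv; exact: Rinf_mulmxX.
split=> [w w_R | v].
  split; first exact: Rinf_mulmx.
  split; first exact: Rinf_invmx.
  by case: w_R => x; exact: (Oinf_Pi Pi_reg Z_halfspaces Ac_schur rho_gt0 S_rho eps_lt1).
split=> [v_R | [w [w_R ->]]]; last exact: Rinf_mulmx.
exists (invmx S *m v); split; first exact: Rinf_invmx.
by rewrite S_inv mulmxA mulmxE -exprS prednK // S_rho mul1mx.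
Qed.
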